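(* For every integer $s\ge0$ there is a positive constant $C$ such that for every smooth function $\psi$ on $\mathbb{R}\times\mathbb{R}^2$, $$|\Gamma\psi(t,x)|_s\le C|x|\,|\psi(t,x)|_{Z,s}+C\langle t-|x|\rangle|\partial\psi(t,x)|_s$$ for all $(t,x)$ with $x\ne0$.
   Context: $\partial_0=\partial_t$, $\partial_j=\partial/\partial x_j$; $\partial\psi=(\partial_0\psi,\partial_1\psi,\partial_2\psi)$. $S=t\partial_t+x_1\partial_1+x_2\partial_2$, $L_j=t\partial_j+x_j\partial_t$ ($j=1,2$), $\Omega=x_1\partial_2-x_2\partial_1$, $\Gamma=(\Gamma_0,\dots,\Gamma_6)=(S,L_1,L_2,\Omega,\partial_0,\partial_1,\partial_2)$, $\Gamma^\alpha=\Gamma_0^{\alpha_0}\cdots\Gamma_6^{\alpha_6}$, $|\phi|_s=\sum_{|\alpha|\le s}|\Gamma^\alpha\phi|$ (for vector-valued $\phi$ such as $\Gamma\psi$ or $\partial\psi$, sum of absolute values of components). $Z_k=\frac{x_k}{|x|}\partial_t+\partial_k$ ($k=1,2$, $x\ne0$), and $|\psi(t,x)|_{Z,s}=\sum_{k=1}^2\sum_{|\alpha|\le s}|Z_k\Gamma^\alpha\psi(t,x)|$. $\langle y\rangle=(1+|y|^2)^{1/2}$. *)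

From Stdlib Require Import Reals List.
From Coquelicot Require Import Coquelicot.
Import ListNotations.
Open Scope R_scope.

(* Functions on R x R^2, written psi t x1 x2. *)
Definition fn := R -> R -> R -> R.

Definition d0 (f : fn) : fn := fun t x1 x2 => Derive (fun s => f s x1 x2) t.
Definition d1 (f : fn) : fn := fun t x1 x2 => Derive (fun y => f t y x2) x1.
Definition d2 (f : fn) : fn := fun t x1 x2 => Derive (fun y => f t x1 y) x2.

Definition dir (i : nat) (f : fn) : fn :=
  match i with 0%nat => d0 f | 1%nat => d1 f | _ => d2 f end.

Fixpoint Dword (w : list nat) (f : fn) : fn :=
  match w with [] => f | i :: w' => dir i (Dword w' f) end.

Definition cont3 (g : fn) : Prop :=
  forall t x1 x2 eps, 0 < eps -> exists del, 0 < del /\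
    forall t' y1 y2, Rabs (t' - t) < del -> Rabs (y1 - x1) < del ->
      Rabs (y2 - x2) < del -> Rabs (g t' y1 y2 - g t x1 x2) < eps.

Definition smooth (f : fn) : Prop :=
  forall w : list nat,
    cont3 (Dword w f) /\
    forall t x1 x2,
      ex_derive (fun s => Dword w f s x1 x2) t /\
      ex_derive (fun y => Dword w f t y x2) x1 /\
      ex_derive (fun y => Dword w f t x1 y) x2.

Definition S_op (f : fn) : fn :=
  fun t x1 x2 => t * d0 f t x1 x2 + x1 * d1 f t x1 x2 + x2 * d2 f t x1 x2.
Definition L1_op (f : fn) : fn := fun t x1 x2 => t * d1 f t x1 x2 + x1 * d0 f t x1 x2.
Definition L2_op (f : fn) : fn := fun t x1 x2 => t * d2 f t x1 x2 + x2 * d0 f t x1 x2.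
Definition Om_op (f : fn) : fn := fun t x1 x2 => x1 * d2 f t x1 x2 - x2 * d1 f t x1 x2.

Definition Gam (j : nat) (f : fn) : fn :=
  match j with
  | 0%nat => S_op f | 1%nat => L1_op f | 2%nat => L2_op f | 3%nat => Om_op f
  | 4%nat => d0 f | 5%nat => d1 f | _ => d2 f end.

(* Gamma^alpha = Gamma_0^{a0} ... Gamma_6^{a6}, alpha = [a0; ...; a6] *)
Fixpoint gam_from (i : nat) (alpha : list nat) (f : fn) : fn :=
  match alpha with
  | [] => f
  | a :: rest => Nat.iter a (Gam i) (gam_from (S i) rest f)
  end.
Definition GamPow (alpha : list nat) (f : fn) : fn := gam_from 0 alpha f.

(* all lists of length k of naturals with sum <= s (each exactly once) *)
Fixpoint multi_indices (k s : nat) : list (list nat) :=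
  match k with
  | O => [[]]
  | S k' => flat_map (fun a => map (cons a) (multi_indices k' (s - a)))
                     (seq 0 (S s))
  end.

Definition sumR (l : list R) : R := fold_right Rplus 0 l.

Definition seminorm (s : nat) (phi : fn) (t x1 x2 : R) : R :=
  sumR (map (fun alpha => Rabs (GamPow alpha phi t x1 x2)) (multi_indices 7 s)).

Definition normGamma (s : nat) (psi : fn) (t x1 x2 : R) : R :=
  sumR (map (fun j => seminorm s (Gam j psi) t x1 x2) (seq 0 7)).

Definition normDeriv (s : nat) (psi : fn) (t x1 x2 : R) : R :=
  sumR (map (fun j => seminorm s (dir j psi) t x1 x2) (seq 0 3)).

Definition normx (x1 x2 : R) : R := sqrt (x1 ^ 2 + x2 ^ 2).
Definition japan (y : R) : R := sqrt (1 + y ^ 2).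

Definition Z1 (f : fn) : fn := fun t x1 x2 => x1 / normx x1 x2 * d0 f t x1 x2 + d1 f t x1 x2.
Definition Z2 (f : fn) : fn := fun t x1 x2 => x2 / normx x1 x2 * d0 f t x1 x2 + d2 f t x1 x2.

Definition normZ (s : nat) (psi : fn) (t x1 x2 : R) : R :=
  sumR (map (fun alpha => Rabs (Z1 (GamPow alpha psi) t x1 x2)
                        + Rabs (Z2 (GamPow alpha psi) t x1 x2))
            (multi_indices 7 s)).

(* With r = |x|, every field Gamma_k is a combination of Z_1, Z_2 with coefficients
   bounded by r and of the derivatives d with coefficients bounded by <t - r>, which bounds
   |Gamma_k phi| pointwise.  The fields Gamma span a Lie algebra in which the derivatives
   span an ideal.  Commuting fields past one another, Gamma^alpha Gamma_j psi (|alpha| <= s)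
   is therefore a constant-coefficient combination of normally ordered Gamma_k Gamma^delta psi
   with |delta| <= s, and d_l Gamma^delta psi one of Gamma^beta d_m psi with |beta| <= |delta|.
   The pointwise bound applied to phi = Gamma^delta psi gives the estimate. *)

From Pilot Require Import Defs.
From Stdlib Require Import Reals Lra Lia List FunctionalExtensionality.
From Coquelicot Require Import Coquelicot.
Import ListNotations.
Open Scope R_scope.

Lemma fn_ext (g h : fn) : (forall t x1 x2, g t x1 x2 = h t x1 x2) -> g = h.
Proof. intros E. do 3 (apply functional_extensionality; intro). apply E. Qed.

(** * Smoothness is preserved by the vector fields *)

Definition coord (i : nat) (t x1 x2 : R) : R :=
  match i with 0%nat => t | 1%nat => x1 | _ => x2 end.

Definition coord_line (i : nat) (h : fn) (t x1 x2 : R) : R -> R :=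
  match i with
  | 0%nat => fun s => h s x1 x2
  | 1%nat => fun s => h t s x2
  | _ => fun s => h t x1 s
  end.

Lemma dir_coord_line i h t x1 x2 :
  dir i h t x1 x2 = Derive (coord_line i h t x1 x2) (coord i t x1 x2).
Proof. destruct i as [|[|i]]; reflexivity. Qed.

Lemma coord_line_at i h t x1 x2 : coord_line i h t x1 x2 (coord i t x1 x2) = h t x1 x2.
Proof. destruct i as [|[|i]]; reflexivity. Qed.

Lemma coord_line_plus i g h t x1 x2 :
  coord_line i (fun t x1 x2 => g t x1 x2 + h t x1 x2) t x1 x2
  = fun s => coord_line i g t x1 x2 s + coord_line i h t x1 x2 s.
Proof. destruct i as [|[|i]]; reflexivity. Qed.

Lemma coord_line_mult i g h t x1 x2 :
  coord_line i (fun t x1 x2 => g t x1 x2 * h t x1 x2) t x1 x2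
  = fun s => coord_line i g t x1 x2 s * coord_line i h t x1 x2 s.
Proof. destruct i as [|[|i]]; reflexivity. Qed.

Lemma coord_line_const i c t x1 x2 : coord_line i (fun _ _ _ => c) t x1 x2 = fun _ => c.
Proof. destruct i as [|[|i]]; reflexivity. Qed.

Definition partially_differentiable (h : fn) : Prop :=
  forall i t x1 x2, ex_derive (coord_line i h t x1 x2) (coord i t x1 x2).

Lemma smooth_partially_differentiable f : smooth f -> partially_differentiable f.
Proof.
  intros Hf i t x1 x2. destruct (proj2 (Hf []) t x1 x2) as [H0 [H1 H2]].
  destruct i as [|[|i]]; assumption.
Qed.

Lemma smooth_dir i f : smooth f -> smooth (dir i f).
Proof.
  intros Hf w. replace (Dword w (dir i f)) with (Dword (w ++ [i]) f); [apply Hf|].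
  induction w as [|j w IH]; simpl; congruence.
Qed.

Lemma smooth_ext g h : (forall t x1 x2, g t x1 x2 = h t x1 x2) -> smooth g -> smooth h.
Proof. intros E. rewrite (fn_ext g h E). auto. Qed.

Lemma smooth_of_dir_closed (K : fn -> Prop) :
  (forall h, K h -> cont3 h /\ partially_differentiable h /\ forall i, K (dir i h)) ->
  forall f, K f -> smooth f.
Proof.
  intros HK f Kf.
  assert (Kw : forall w, K (Dword w f))
    by (induction w as [|i w IH]; [exact Kf|apply (HK _ IH)]).
  intros w. destruct (HK _ (Kw w)) as [Hc [Hp _]]. split; [exact Hc|].
  intros t x1 x2. repeat split; [apply (Hp 0%nat)|apply (Hp 1%nat)|apply (Hp 2%nat)].
Qed.

Lemma cont3_const c : cont3 (fun _ _ _ => c).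
Proof.
  intros t x1 x2 eps He. exists 1. split; [lra|].
  intros. rewrite Rminus_eq_0, Rabs_R0. exact He.
Qed.

Lemma cont3_coord i : cont3 (coord i).
Proof.
  intros t x1 x2 eps He. exists eps. split; [exact He|].
  intros t' y1 y2 Ht Hy1 Hy2. destruct i as [|[|i]]; assumption.
Qed.

Lemma cont3_plus g h : cont3 g -> cont3 h -> cont3 (fun t x1 x2 => g t x1 x2 + h t x1 x2).
Proof.
  intros Hg Hh t x1 x2 eps Heps.
  destruct (Hg t x1 x2 (eps / 2)) as [dg [Hdg Pg]]; [lra|].
  destruct (Hh t x1 x2 (eps / 2)) as [dh [Hdh Ph]]; [lra|].
  exists (Rmin dg dh). split; [apply Rmin_pos; assumption|].
  intros t' y1 y2 A B C. apply Rmin_Rgt in A, B, C.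
  specialize (Pg t' y1 y2 (proj1 A) (proj1 B) (proj1 C)).
  specialize (Ph t' y1 y2 (proj2 A) (proj2 B) (proj2 C)).
  replace (g t' y1 y2 + h t' y1 y2 - (g t x1 x2 + h t x1 x2))
    with ((g t' y1 y2 - g t x1 x2) + (h t' y1 y2 - h t x1 x2)) by ring.
  pose proof (Rabs_triang (g t' y1 y2 - g t x1 x2) (h t' y1 y2 - h t x1 x2)). lra.
Qed.

Lemma cont3_mult g h : cont3 g -> cont3 h -> cont3 (fun t x1 x2 => g t x1 x2 * h t x1 x2).
Proof.
  intros Hg Hh t x1 x2 eps Heps.
  set (G := Rabs (g t x1 x2)). set (H := Rabs (h t x1 x2)).
  assert (HG : 0 <= G) by apply Rabs_pos. assert (HH : 0 <= H) by apply Rabs_pos.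
  set (e := Rmin 1 (eps / (1 + G + H))).
  assert (He : 0 < e) by (apply Rmin_pos; [lra|apply Rdiv_lt_0_compat; lra]).
  assert (He1 : e <= 1) by apply Rmin_l.
  assert (Heps' : e * (1 + G + H) <= eps).
  { apply Rle_trans with (eps / (1 + G + H) * (1 + G + H)).
    - apply Rmult_le_compat_r; [lra|apply Rmin_r].
    - right. field. lra. }
  destruct (Hg t x1 x2 e He) as [dg [Hdg Pg]].
  destruct (Hh t x1 x2 e He) as [dh [Hdh Ph]].
  exists (Rmin dg dh). split; [apply Rmin_pos; assumption|].
  intros t' y1 y2 A B C. apply Rmin_Rgt in A, B, C.
  specialize (Pg t' y1 y2 (proj1 A) (proj1 B) (proj1 C)).
  specialize (Ph t' y1 y2 (proj2 A) (proj2 B) (proj2 C)).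
  set (a := g t' y1 y2 - g t x1 x2) in *. set (b := h t' y1 y2 - h t x1 x2) in *.
  replace (g t' y1 y2 * h t' y1 y2 - g t x1 x2 * h t x1 x2)
    with (a * b + g t x1 x2 * b + h t x1 x2 * a) by (unfold a, b; ring).
  pose proof (Rabs_triang (a * b + g t x1 x2 * b) (h t x1 x2 * a)) as T1.
  pose proof (Rabs_triang (a * b) (g t x1 x2 * b)) as T2.
  rewrite Rabs_mult in T1. rewrite !Rabs_mult in T2. fold G H in T1, T2.
  pose proof (Rabs_pos a). pose proof (Rabs_pos b).
  assert (Rabs a * Rabs b <= Rabs b) by nra.
  assert (G * Rabs b <= G * e) by nra.
  assert (H * Rabs a <= H * e) by nra.
  lra.
Qed.

Record affine := Affine { aff_c : R; aff_t : R; aff_x1 : R; aff_x2 : R }.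

Notation affine_term := (affine * fn)%type.

Definition eval_affine (a : affine) : fn :=
  fun t x1 x2 => aff_c a + aff_t a * t + aff_x1 a * x1 + aff_x2 a * x2.

Definition affine_slope (i : nat) (a : affine) : R :=
  match i with 0%nat => aff_t a | 1%nat => aff_x1 a | _ => aff_x2 a end.

Definition affine_const (c : R) : affine := Affine c 0 0 0.

Definition affine_comb (l : list affine_term) : fn :=
  fun t x1 x2 => sumR (map (fun p => eval_affine (fst p) t x1 x2 * snd p t x1 x2) l).

Definition all_smooth (l : list affine_term) : Prop := List.Forall (fun p => smooth (snd p)) l.

Definition dir_terms (i : nat) (l : list affine_term) : list affine_term :=
  flat_map (fun p => [(affine_const (affine_slope i (fst p)), snd p); (fst p, dir i (snd p))]) l.

Lemma cont3_affine a : cont3 (eval_affine a).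
Proof.
  unfold eval_affine.
  pose proof (cont3_coord 0) as Ct. pose proof (cont3_coord 1) as C1. pose proof (cont3_coord 2) as C2.
  repeat apply cont3_plus; try apply cont3_mult; auto using cont3_const.
Qed.

Lemma is_derive_affine i a t x1 x2 :
  is_derive (coord_line i (eval_affine a) t x1 x2) (coord i t x1 x2) (affine_slope i a).
Proof. unfold eval_affine; destruct i as [|[|i]]; simpl; auto_derive; auto; ring. Qed.

Lemma cont3_affine_comb l : all_smooth l -> cont3 (affine_comb l).
Proof.
  induction 1 as [|p l Hp _ IH]; [exact (cont3_const 0)|].
  apply cont3_plus; [apply cont3_mult; [apply cont3_affine|apply (proj1 (Hp []))]|exact IH].
Qed.

Lemma affine_comb_term_differentiable p i t x1 x2 : smooth (snd p) ->
  ex_derive (fun s => coord_line i (eval_affine (fst p)) t x1 x2 s * coord_line i (snd p) t x1 x2 s)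
    (coord i t x1 x2).
Proof.
  intros Hp. apply ex_derive_mult.
  - eexists. apply is_derive_affine.
  - apply smooth_partially_differentiable, Hp.
Qed.

Lemma partially_differentiable_affine_comb l : all_smooth l -> partially_differentiable (affine_comb l).
Proof.
  induction 1 as [|p l Hp _ IH]; intros i t x1 x2.
  - unfold affine_comb; simpl. rewrite coord_line_const. apply ex_derive_const.
  - unfold affine_comb; simpl. rewrite coord_line_plus, coord_line_mult.
    apply (ex_derive_plus (fun _ => _ * _)); [apply affine_comb_term_differentiable, Hp|apply IH].
Qed.

Lemma dir_affine_comb i l : all_smooth l ->
  forall t x1 x2, dir i (affine_comb l) t x1 x2 = affine_comb (dir_terms i l) t x1 x2.
Proof.
  induction 1 as [|p l Hp Hl IH]; intros t x1 x2; rewrite dir_coord_line.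
  - unfold affine_comb; simpl. rewrite coord_line_const. apply Derive_const.
  - unfold affine_comb at 1; simpl. rewrite coord_line_plus, coord_line_mult.
    rewrite (Derive_plus (fun _ => _ * _)), Derive_mult;
      [|eexists; apply is_derive_affine|apply smooth_partially_differentiable, Hp
       |apply affine_comb_term_differentiable, Hp|apply partially_differentiable_affine_comb, Hl].
    replace (Derive _ _) with (affine_slope i (fst p))
      by (symmetry; apply is_derive_unique, is_derive_affine).
    rewrite <- 2!dir_coord_line, !coord_line_at. fold (affine_comb l). rewrite IH.
    destruct p as [a h]. unfold affine_comb, eval_affine; simpl. ring.
Qed.

Lemma all_smooth_dir_terms i l : all_smooth l -> all_smooth (dir_terms i l).
Proof.
  induction 1 as [|p l Hp _ IH]; simpl; [constructor|].
  apply List.Forall_cons; [exact Hp|]. apply List.Forall_cons; [apply smooth_dir, Hp|exact IH].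
Qed.

Lemma smooth_affine_comb l : all_smooth l -> smooth (affine_comb l).
Proof.
  intros Hl. apply (smooth_of_dir_closed (fun h => exists l, all_smooth l /\ h = affine_comb l));
    [|eauto].
  intros h [l' [Hl' ->]]. split; [apply cont3_affine_comb, Hl'|].
  split; [apply partially_differentiable_affine_comb, Hl'|].
  intros i. exists (dir_terms i l'). split; [apply all_smooth_dir_terms, Hl'|].
  apply fn_ext, dir_affine_comb, Hl'.
Qed.

Lemma smooth_zero : smooth (fun _ _ _ => 0).
Proof. apply (smooth_affine_comb []). constructor. Qed.

Lemma smooth_lincomb c g h : smooth g -> smooth h ->
  smooth (fun t x1 x2 => c * g t x1 x2 + h t x1 x2).
Proof.
  intros Hg Hh. apply (smooth_ext (affine_comb [(affine_const c, g); (affine_const 1, h)])).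
  - intros. unfold affine_comb, eval_affine; simpl. ring.
  - apply smooth_affine_comb. repeat (apply List.Forall_cons; [assumption|]). apply List.Forall_nil.
Qed.

Definition Gam_terms (j : nat) (g : fn) : list affine_term :=
  match j with
  | 0%nat => [(Affine 0 1 0 0, dir 0 g); (Affine 0 0 1 0, dir 1 g); (Affine 0 0 0 1, dir 2 g)]
  | 1%nat => [(Affine 0 1 0 0, dir 1 g); (Affine 0 0 1 0, dir 0 g)]
  | 2%nat => [(Affine 0 1 0 0, dir 2 g); (Affine 0 0 0 1, dir 0 g)]
  | 3%nat => [(Affine 0 0 1 0, dir 2 g); (Affine 0 0 0 (-1), dir 1 g)]
  | 4%nat => [(affine_const 1, dir 0 g)]
  | 5%nat => [(affine_const 1, dir 1 g)]
  | _ => [(affine_const 1, dir 2 g)]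
  end.

Lemma Gam_affine_comb j g t x1 x2 : Gam j g t x1 x2 = affine_comb (Gam_terms j g) t x1 x2.
Proof.
  unfold affine_comb, eval_affine.
  destruct j as [|[|[|[|[|[|j]]]]]]; simpl;
    unfold S_op, L1_op, L2_op, Om_op; simpl; ring.
Qed.

Lemma all_smooth_Gam_terms j g : smooth g -> all_smooth (Gam_terms j g).
Proof.
  intros Hg. pose proof (smooth_dir 0 g Hg). pose proof (smooth_dir 1 g Hg).
  pose proof (smooth_dir 2 g Hg).
  destruct j as [|[|[|[|[|[|j]]]]]];
    repeat (apply List.Forall_cons; [assumption|]); apply List.Forall_nil.
Qed.

Lemma smooth_Gam j g : smooth g -> smooth (Gam j g).
Proof.
  intros Hg. apply (smooth_ext _ _ (fun t x1 x2 => eq_sym (Gam_affine_comb j g t x1 x2))).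
  apply smooth_affine_comb, all_smooth_Gam_terms, Hg.
Qed.

Lemma smooth_GamPow alpha g : smooth g -> smooth (GamPow alpha g).
Proof.
  unfold GamPow. generalize 0%nat. induction alpha as [|a alpha IH]; intros i Hg; simpl; [exact Hg|].
  induction a as [|a IHa]; simpl; auto using smooth_Gam.
Qed.

(** * Commutators *)

Definition cont2_at (F : R -> R -> R) (x y : R) : Prop :=
  forall eps, 0 < eps -> exists del, 0 < del /\
    forall u v, Rabs (u - x) < del -> Rabs (v - y) < del -> Rabs (F u v - F x y) < eps.

Lemma Derive_comm (f : R -> R -> R) x y :
  (forall u v, ex_derive (fun z => f z v) u /\ ex_derive (fun z => f u z) v /\
     ex_derive (fun z => Derive (fun s => f z s) v) u /\
     ex_derive (fun z => Derive (fun s => f s z) u) v) ->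
  cont2_at (fun u v => Derive (fun z => Derive (fun s => f z s) v) u) x y ->
  cont2_at (fun u v => Derive (fun z => Derive (fun s => f s z) u) v) x y ->
  Derive (fun z => Derive (fun s => f z s) y) x = Derive (fun z => Derive (fun s => f s z) x) y.
Proof.
  intros Hd C1 C2. apply Schwarz.
  - exists (mkposreal 1 Rlt_0_1). intros; apply Hd.
  - intros eps. destruct (C1 eps (cond_pos eps)) as [d [Hd' P]].
    exists (mkposreal d Hd'). intros; apply P; assumption.
  - intros eps. destruct (C2 eps (cond_pos eps)) as [d [Hd' P]].
    exists (mkposreal d Hd'). intros; apply P; assumption.
Qed.

Lemma smooth_ex_derive w i g t x1 x2 : smooth g ->
  ex_derive (coord_line i (Dword w g) t x1 x2) (coord i t x1 x2).
Proof.
  intros Hg. apply smooth_partially_differentiable.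
  induction w as [|j w IH]; [exact Hg|apply smooth_dir, IH].
Qed.

Lemma Rabs_R0_lt d : 0 < d -> Rabs 0 < d.
Proof. rewrite Rabs_R0. auto. Qed.

Lemma dir_1_0_comm g t x1 x2 : smooth g -> dir 1 (dir 0 g) t x1 x2 = dir 0 (dir 1 g) t x1 x2.
Proof.
  intros Hg. symmetry. apply (Derive_comm (fun u v => g u v x2) t x1).
  - intros u v. repeat split;
      [apply (smooth_ex_derive [] 0 g u v x2)|apply (smooth_ex_derive [] 1 g u v x2)
      |apply (smooth_ex_derive [1%nat] 0 g u v x2)|apply (smooth_ex_derive [0%nat] 1 g u v x2)];
      exact Hg.
  - intros eps He. destruct (proj1 (Hg [0; 1]%nat) t x1 x2 eps He) as [d [Hd P]].
    exists d. split; [exact Hd|]. intros u v A B. apply (P u v x2 A B).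
    rewrite Rminus_eq_0. apply Rabs_R0_lt, Hd.
  - intros eps He. destruct (proj1 (Hg [1; 0]%nat) t x1 x2 eps He) as [d [Hd P]].
    exists d. split; [exact Hd|]. intros u v A B. apply (P u v x2 A B).
    rewrite Rminus_eq_0. apply Rabs_R0_lt, Hd.
Qed.

Lemma dir_2_0_comm g t x1 x2 : smooth g -> dir 2 (dir 0 g) t x1 x2 = dir 0 (dir 2 g) t x1 x2.
Proof.
  intros Hg. symmetry. apply (Derive_comm (fun u v => g u x1 v) t x2).
  - intros u v. repeat split;
      [apply (smooth_ex_derive [] 0 g u x1 v)|apply (smooth_ex_derive [] 2 g u x1 v)
      |apply (smooth_ex_derive [2%nat] 0 g u x1 v)|apply (smooth_ex_derive [0%nat] 2 g u x1 v)];
      exact Hg.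
  - intros eps He. destruct (proj1 (Hg [0; 2]%nat) t x1 x2 eps He) as [d [Hd P]].
    exists d. split; [exact Hd|]. intros u v A B. apply (P u x1 v A); [|exact B].
    rewrite Rminus_eq_0. apply Rabs_R0_lt, Hd.
  - intros eps He. destruct (proj1 (Hg [2; 0]%nat) t x1 x2 eps He) as [d [Hd P]].
    exists d. split; [exact Hd|]. intros u v A B. apply (P u x1 v A); [|exact B].
    rewrite Rminus_eq_0. apply Rabs_R0_lt, Hd.
Qed.

Lemma dir_2_1_comm g t x1 x2 : smooth g -> dir 2 (dir 1 g) t x1 x2 = dir 1 (dir 2 g) t x1 x2.
Proof.
  intros Hg. symmetry. apply (Derive_comm (fun u v => g t u v) x1 x2).
  - intros u v. repeat split;
      [apply (smooth_ex_derive [] 1 g t u v)|apply (smooth_ex_derive [] 2 g t u v)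
      |apply (smooth_ex_derive [2%nat] 1 g t u v)|apply (smooth_ex_derive [1%nat] 2 g t u v)];
      exact Hg.
  - intros eps He. destruct (proj1 (Hg [1; 2]%nat) t x1 x2 eps He) as [d [Hd P]].
    exists d. split; [exact Hd|]. intros u v A B. apply (P t u v); [|exact A|exact B].
    rewrite Rminus_eq_0. apply Rabs_R0_lt, Hd.
  - intros eps He. destruct (proj1 (Hg [2; 1]%nat) t x1 x2 eps He) as [d [Hd P]].
    exists d. split; [exact Hd|]. intros u v A B. apply (P t u v); [|exact A|exact B].
    rewrite Rminus_eq_0. apply Rabs_R0_lt, Hd.
Qed.

Lemma dir_Gam j k g t x1 x2 : smooth g ->
  dir j (Gam k g) t x1 x2 = affine_comb (dir_terms j (Gam_terms k g)) t x1 x2.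
Proof.
  intros Hg. rewrite <- dir_affine_comb by (apply all_smooth_Gam_terms, Hg).
  f_equal. apply fn_ext, Gam_affine_comb.
Qed.

Definition unit_row (l : nat) (c : R) : list R :=
  map (fun m => if Nat.eqb m l then c else 0) (seq 0 7).

Definition comm_row (i k : nat) : list R :=
  match i, k with
  | 4%nat, 0%nat => unit_row 4 1 | 0%nat, 4%nat => unit_row 4 (-1)
  | 5%nat, 0%nat => unit_row 5 1 | 0%nat, 5%nat => unit_row 5 (-1)
  | 6%nat, 0%nat => unit_row 6 1 | 0%nat, 6%nat => unit_row 6 (-1)
  | 4%nat, 1%nat => unit_row 5 1 | 1%nat, 4%nat => unit_row 5 (-1)
  | 4%nat, 2%nat => unit_row 6 1 | 2%nat, 4%nat => unit_row 6 (-1)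
  | 5%nat, 1%nat => unit_row 4 1 | 1%nat, 5%nat => unit_row 4 (-1)
  | 6%nat, 2%nat => unit_row 4 1 | 2%nat, 6%nat => unit_row 4 (-1)
  | 5%nat, 3%nat => unit_row 6 1 | 3%nat, 5%nat => unit_row 6 (-1)
  | 6%nat, 3%nat => unit_row 5 (-1) | 3%nat, 6%nat => unit_row 5 1
  | 1%nat, 2%nat => unit_row 3 1 | 2%nat, 1%nat => unit_row 3 (-1)
  | 1%nat, 3%nat => unit_row 2 1 | 3%nat, 1%nat => unit_row 2 (-1)
  | 2%nat, 3%nat => unit_row 1 (-1) | 3%nat, 2%nat => unit_row 1 1
  | _, _ => unit_row 0 0
  end.

Definition comm_coeff (i k l : nat) : R := nth l (comm_row i k) 0.

Lemma sumR_seq7 (F : nat -> R) :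
  sumR (map F (seq 0 7))
  = F 0%nat + (F 1%nat + (F 2%nat + (F 3%nat + (F 4%nat + (F 5%nat + (F 6%nat + 0)))))).
Proof. reflexivity. Qed.

Lemma Gam_commutator i k g t x1 x2 : (i < 7)%nat -> (k < 7)%nat -> smooth g ->
  Gam i (Gam k g) t x1 x2
  = Gam k (Gam i g) t x1 x2 + sumR (map (fun l => comm_coeff i k l * Gam l g t x1 x2) (seq 0 7)).
Proof.
  intros Hi Hk Hg. rewrite sumR_seq7, !Gam_affine_comb.
  assert (i = 0 \/ i = 1 \/ i = 2 \/ i = 3 \/ i = 4 \/ i = 5 \/ i = 6)%nat as Ei by lia.
  assert (k = 0 \/ k = 1 \/ k = 2 \/ k = 3 \/ k = 4 \/ k = 5 \/ k = 6)%nat as Ek by lia.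
  destruct Ei as [->|[->|[->|[->|[->|[->| ->]]]]]]; destruct Ek as [->|[->|[->|[->|[->|[->| ->]]]]]];
    cbn [Gam_terms affine_comb map fold_right sumR fst snd];
    rewrite ?(dir_Gam _ _ g t x1 x2 Hg);
    cbn [Gam_terms dir_terms affine_comb flat_map app map fold_right sumR fst snd affine_slope
         comm_coeff comm_row unit_row seq nth Nat.eqb];
    unfold eval_affine, affine_const; cbn [aff_c aff_t aff_x1 aff_x2];
    rewrite ?(dir_1_0_comm g t x1 x2 Hg), ?(dir_2_0_comm g t x1 x2 Hg), ?(dir_2_1_comm g t x1 x2 Hg);
    ring.
Qed.

(** * Normal ordering *)

Fixpoint incr_at (i : nat) (alpha : list nat) : list nat :=
  match alpha with
  | [] => []
  | a :: rest => match i with 0%nat => S a :: rest | S i' => a :: incr_at i' rest end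
  end.

Lemma length_incr_at i alpha : length (incr_at i alpha) = length alpha.
Proof. revert i; induction alpha as [|a alpha IH]; intros [|i]; simpl; auto. Qed.

Lemma list_sum_incr_at i alpha : (i < length alpha)%nat -> list_sum (incr_at i alpha) = S (list_sum alpha).
Proof.
  revert i; induction alpha as [|a alpha IH]; intros [|i] H; simpl in *; try lia.
  rewrite IH by lia. lia.
Qed.

Lemma incr_at_zeros i b rest : incr_at i (repeat 0%nat i ++ b :: rest) = repeat 0%nat i ++ S b :: rest.
Proof. induction i; simpl; congruence. Qed.

Lemma incr_at_after i k a rest : (k < i)%nat ->
  incr_at i (repeat 0%nat k ++ a :: rest) = repeat 0%nat k ++ a :: incr_at (i - S k) rest.
Proof.
  revert i; induction k as [|k IH]; intros [|i] H; simpl; try lia.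
  - rewrite Nat.sub_0_r. reflexivity.
  - rewrite IH by lia. reflexivity.
Qed.

Lemma list_sum_leading_succ k a rest :
  list_sum (repeat 0%nat k ++ S a :: rest) = S (list_sum (repeat 0%nat k ++ a :: rest)).
Proof. induction k; simpl; auto. Qed.

Lemma length_leading_change k a b rest :
  length (repeat 0%nat k ++ a :: rest) = length (repeat 0%nat k ++ b :: rest).
Proof. rewrite !length_app. reflexivity. Qed.

Lemma leading_zeros_or_succ i gamma : (i <= length gamma)%nat ->
  (exists delta, gamma = repeat 0%nat i ++ delta) \/
  (exists k a rest, (k < i)%nat /\ gamma = repeat 0%nat k ++ S a :: rest).
Proof.
  revert gamma; induction i as [|i IH]; intros gamma H.
  - left. exists gamma. reflexivity.
  - destruct gamma as [|[|a] gamma]; simpl in H; [lia| |].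
    + destruct (IH gamma) as [[delta E]|[k [a [rest [Hk E]]]]]; [lia| |]; subst gamma.
      * left. exists delta. reflexivity.
      * right. exists (S k), a, rest. split; [lia|reflexivity].
    + right. exists 0%nat, a, gamma. split; [lia|reflexivity].
Qed.

Lemma gam_from_zeros j m alpha f : gam_from j (repeat 0%nat m ++ alpha) f = gam_from (j + m) alpha f.
Proof.
  revert j; induction m as [|m IH]; intros j; simpl.
  - rewrite Nat.add_0_r. reflexivity.
  - rewrite IH. f_equal. lia.
Qed.

Lemma GamPow_leading_succ i b rest f :
  GamPow (repeat 0%nat i ++ S b :: rest) f = Gam i (GamPow (repeat 0%nat i ++ b :: rest) f).
Proof. unfold GamPow. rewrite !gam_from_zeros. reflexivity. Qed.

Lemma In_multi_indices k n alpha :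
  In alpha (multi_indices k n) <-> length alpha = k /\ (list_sum alpha <= n)%nat.
Proof.
  revert n alpha; induction k as [|k IH]; intros n alpha.
  - simpl. split.
    + intros [<-|[]]. simpl. lia.
    + intros [H _]. destruct alpha; simpl in H; [auto|lia].
  - cbn [multi_indices]. rewrite in_flat_map. split.
    + intros [a [Ha Hin]]. apply in_map_iff in Hin. destruct Hin as [delta [<- Hd]].
      apply IH in Hd. apply in_seq in Ha. simpl. lia.
    + intros [Hl Hs]. destruct alpha as [|a delta]; simpl in Hl, Hs; [lia|].
      exists a. split; [apply in_seq; lia|]. apply in_map, IH. lia.
Qed.

Lemma sumR_app l1 l2 : sumR (l1 ++ l2) = sumR l1 + sumR l2.
Proof. induction l1 as [|a l1 IH]; simpl; [ring|]. rewrite IH. ring. Qed.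

Lemma sumR_map_scal {X : Type} c (F : X -> R) l :
  sumR (map (fun x => c * F x) l) = c * sumR (map F l).
Proof. induction l as [|a l IH]; simpl; [ring|]. rewrite IH. ring. Qed.

Definition span_term := (R * list nat * (fn -> fn))%type.

Definition eval_terms (cs : list span_term) (f : fn) : fn :=
  fun t x1 x2 => sumR (map (fun p => fst (fst p) * GamPow (snd (fst p)) (snd p f) t x1 x2) cs).

Definition in_span (P : list nat -> (fn -> fn) -> Prop) (G : fn -> fn) : Prop :=
  exists cs : list span_term, List.Forall (fun p => P (snd (fst p)) (snd p)) cs /\
    forall f, smooth f -> forall t x1 x2, G f t x1 x2 = eval_terms cs f t x1 x2.

Section Span.

Variable P : list nat -> (fn -> fn) -> Prop.

Lemma in_span_ext G G' : (forall f, smooth f -> forall t x1 x2, G f t x1 x2 = G' f t x1 x2) ->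
  in_span P G -> in_span P G'.
Proof. intros E [cs [Hcs HG]]. exists cs. split; [exact Hcs|]. intros. rewrite <- E; auto. Qed.

Lemma in_span_zero : in_span P (fun _ _ _ _ => 0).
Proof. exists []. split; [constructor|reflexivity]. Qed.

Lemma in_span_gen beta B : P beta B -> in_span P (fun f => GamPow beta (B f)).
Proof.
  intros H. exists [(1, beta, B)]. split; [constructor; auto|].
  intros. unfold eval_terms; simpl. ring.
Qed.

Lemma in_span_lincomb c G1 G2 : in_span P G1 -> in_span P G2 ->
  in_span P (fun f t x1 x2 => c * G1 f t x1 x2 + G2 f t x1 x2).
Proof.
  intros [cs1 [A1 E1]] [cs2 [A2 E2]].
  exists (map (fun p => (c * fst (fst p), snd (fst p), snd p)) cs1 ++ cs2). split.
  - apply List.Forall_app. split; [apply List.Forall_map, A1|exact A2].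
  - intros f Hf t x1 x2. rewrite E1, E2 by exact Hf. unfold eval_terms.
    rewrite map_app, sumR_app, map_map, <- sumR_map_scal. simpl.
    f_equal. f_equal. apply map_ext. intros. ring.
Qed.

Lemma in_span_add G1 G2 : in_span P G1 -> in_span P G2 ->
  in_span P (fun f t x1 x2 => G1 f t x1 x2 + G2 f t x1 x2).
Proof.
  intros H1 H2. apply (in_span_ext (fun f t x1 x2 => 1 * G1 f t x1 x2 + G2 f t x1 x2)).
  - intros. ring.
  - apply in_span_lincomb; assumption.
Qed.

Lemma in_span_sum (L : list nat) (c : nat -> R) (F : nat -> fn -> fn) :
  (forall l, In l L -> c l = 0 \/ in_span P (F l)) ->
  in_span P (fun f t x1 x2 => sumR (map (fun l => c l * F l f t x1 x2) L)).
Proof.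
  induction L as [|l L IH]; intros H; [apply in_span_zero|].
  destruct (H l (or_introl eq_refl)) as [E|Hl].
  - apply (in_span_ext (fun f t x1 x2 => sumR (map (fun l => c l * F l f t x1 x2) L))).
    + intros. simpl. rewrite E. ring.
    + apply IH. intros; apply H; right; assumption.
  - apply in_span_lincomb; [exact Hl|]. apply IH. intros; apply H; right; assumption.
Qed.

Lemma smooth_eval_terms cs f :
  (forall beta B, P beta B -> forall f, smooth f -> smooth (B f)) ->
  List.Forall (fun p => P (snd (fst p)) (snd p)) cs -> smooth f -> smooth (eval_terms cs f).
Proof.
  intros HP Hcs Hf. induction Hcs as [|p cs Hp _ IH]; [exact smooth_zero|].
  apply smooth_lincomb; [|exact IH]. apply smooth_GamPow. eapply HP; eauto.
Qed.

Lemma in_span_bound G : in_span P G -> exists K, 0 <= K /\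
  forall f, smooth f -> forall t x1 x2 M,
    (forall beta B, P beta B -> Rabs (GamPow beta (B f) t x1 x2) <= M) ->
    Rabs (G f t x1 x2) <= K * M.
Proof.
  intros [cs [Hcs E]]. exists (sumR (map (fun p => Rabs (fst (fst p))) cs)). split.
  - clear. induction cs as [|p cs IH]; simpl; [lra|]. pose proof (Rabs_pos (fst (fst p))). lra.
  - intros f Hf t x1 x2 M HM. rewrite E by exact Hf. unfold eval_terms. clear E.
    induction Hcs as [|p cs Hp _ IH]; simpl; [rewrite Rabs_R0; lra|].
    eapply Rle_trans; [apply Rabs_triang|]. rewrite Rabs_mult.
    pose proof (Rabs_pos (fst (fst p))) as Hc.
    pose proof (Rmult_le_compat_l _ _ _ Hc (HM _ _ Hp)). lra.
Qed.

End Span.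

Lemma in_span_mono (P Q : list nat -> (fn -> fn) -> Prop) G :
  (forall beta B, P beta B -> Q beta B) -> in_span P G -> in_span Q G.
Proof.
  intros H [cs [Hcs E]]. exists cs. split; [|exact E].
  eapply List.Forall_impl; [|exact Hcs]. intros; apply H; assumption.
Qed.

Lemma in_span_precomp P G (C : fn -> fn) : (forall f, smooth f -> smooth (C f)) -> in_span P G ->
  in_span (fun beta B' => exists B, P beta B /\ B' = fun f => B (C f)) (fun f => G (C f)).
Proof.
  intros HC [cs [Hcs E]].
  exists (map (fun p => (fst p, fun f => snd p (C f))) cs). split.
  - apply List.Forall_map. eapply List.Forall_impl; [|exact Hcs]. intros p Hp. exists (snd p). auto.
  - intros f Hf t x1 x2. rewrite E by auto. unfold eval_terms. rewrite map_map. reflexivity.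
Qed.

Lemma dir_lincomb i c g h t x1 x2 : smooth g -> smooth h ->
  dir i (fun t x1 x2 => c * g t x1 x2 + h t x1 x2) t x1 x2 = c * dir i g t x1 x2 + dir i h t x1 x2.
Proof.
  intros Hg Hh. rewrite !dir_coord_line.
  replace (coord_line i (fun t x1 x2 => c * g t x1 x2 + h t x1 x2) t x1 x2)
    with (fun s => c * coord_line i g t x1 x2 s + coord_line i h t x1 x2 s)
    by (destruct i as [|[|i]]; reflexivity).
  rewrite (Derive_plus (fun _ => _ * _)), Derive_scal; [reflexivity| |].
  - apply ex_derive_scal, smooth_partially_differentiable, Hg.
  - apply smooth_partially_differentiable, Hh.
Qed.

Lemma Gam_lincomb k c g h t x1 x2 : smooth g -> smooth h ->
  Gam k (fun t x1 x2 => c * g t x1 x2 + h t x1 x2) t x1 x2 = c * Gam k g t x1 x2 + Gam k h t x1 x2.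
Proof.
  intros Hg Hh.
  destruct k as [|[|[|[|[|[|k]]]]]]; cbn [Gam]; unfold S_op, L1_op, L2_op, Om_op;
    change d0 with (dir 0); change Defs.d1 with (dir 1); change Defs.d2 with (dir 2);
    rewrite ?dir_lincomb by assumption; ring.
Qed.

Lemma Gam_zero k t x1 x2 : Gam k (fun _ _ _ => 0) t x1 x2 = 0.
Proof.
  assert (D : forall i, dir i (fun _ _ _ => 0) t x1 x2 = 0).
  { intros i. rewrite dir_coord_line, coord_line_const. apply Derive_const. }
  destruct k as [|[|[|[|[|[|k]]]]]]; cbn [Gam]; unfold S_op, L1_op, L2_op, Om_op;
    change d0 with (dir 0); change Defs.d1 with (dir 1); change Defs.d2 with (dir 2);
    rewrite ?D; ring.
Qed.

Lemma in_span_Gam k (P Q : list nat -> (fn -> fn) -> Prop) G :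
  (forall beta B, P beta B ->
     (forall f, smooth f -> smooth (B f)) /\ in_span Q (fun f => Gam k (GamPow beta (B f)))) ->
  in_span P G -> in_span Q (fun f => Gam k (G f)).
Proof.
  intros H [cs [Hcs E]].
  apply (in_span_ext _ (fun f => Gam k (eval_terms cs f))).
  { intros f Hf t x1 x2. f_equal. symmetry. apply fn_ext, E, Hf. }
  assert (HP : forall beta B, P beta B -> forall f, smooth f -> smooth (B f))
    by (intros; eapply H; eauto).
  clear E. induction Hcs as [|p cs Hp Hcs IH].
  - apply (in_span_ext _ (fun _ _ _ _ => 0)); [|apply in_span_zero].
    intros. symmetry. apply Gam_zero.
  - apply (in_span_ext _ (fun f t x1 x2 =>
      fst (fst p) * Gam k (GamPow (snd (fst p)) (snd p f)) t x1 x2 + Gam k (eval_terms cs f) t x1 x2)).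
    + intros f Hf t x1 x2. symmetry. apply Gam_lincomb.
      * apply smooth_GamPow. eapply HP; eauto.
      * apply (smooth_eval_terms P); assumption.
    + apply in_span_lincomb; [apply (H _ _ Hp)|exact IH].
Qed.

Lemma Gam_minus k g h t x1 x2 : smooth g -> smooth h ->
  Gam k (fun t x1 x2 => g t x1 x2 - h t x1 x2) t x1 x2 = Gam k g t x1 x2 - Gam k h t x1 x2.
Proof.
  intros Hg Hh.
  replace (fun t x1 x2 => g t x1 x2 - h t x1 x2) with (fun t x1 x2 => (-1) * h t x1 x2 + g t x1 x2)
    by (apply fn_ext; intros; ring).
  rewrite Gam_lincomb by assumption. ring.
Qed.

Definition Gam_monomials (n : nat) (beta : list nat) (B : fn -> fn) : Prop :=
  B = (fun f => f) /\ length beta = 7%nat /\ (1 <= list_sum beta <= n)%nat.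

Lemma Gam_monomials_mono m n : (m <= n)%nat ->
  forall beta B, Gam_monomials m beta B -> Gam_monomials n beta B.
Proof. intros Hmn beta B [HB [Hl Hs]]. repeat split; auto; lia. Qed.

Definition reorder_error (i : nat) (gamma : list nat) (f : fn) : fn :=
  fun t x1 x2 => Gam i (GamPow gamma f) t x1 x2 - GamPow (incr_at i gamma) f t x1 x2.

Lemma reorder_error_zeros i b rest f t x1 x2 :
  reorder_error i (repeat 0%nat i ++ b :: rest) f t x1 x2 = 0.
Proof. unfold reorder_error. rewrite incr_at_zeros, GamPow_leading_succ. ring. Qed.

Lemma reorder_error_zeros_span P i delta : (i < length (repeat 0%nat i ++ delta))%nat ->
  in_span P (reorder_error i (repeat 0%nat i ++ delta)).
Proof.
  intros Hi. destruct delta as [|b rest].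
  - rewrite app_nil_r, repeat_length in Hi. lia.
  - apply (in_span_ext _ (fun _ _ _ _ => 0)); [|apply in_span_zero].
    intros. symmetry. apply reorder_error_zeros.
Qed.

Lemma reorder_error_step i k a rest f t x1 x2 : (k < i < 7)%nat -> smooth f ->
  let gamma' := repeat 0%nat k ++ a :: rest in
  reorder_error i (repeat 0%nat k ++ S a :: rest) f t x1 x2
  = Gam k (reorder_error i gamma' f) t x1 x2
    + sumR (map (fun l => comm_coeff i k l * Gam l (GamPow gamma' f) t x1 x2) (seq 0 7)).
Proof.
  intros Hki Hf gamma'.
  assert (Hs : smooth (GamPow gamma' f)) by (apply smooth_GamPow, Hf).
  unfold reorder_error at 1. rewrite GamPow_leading_succ, incr_at_after, GamPow_leading_succ by lia.
  fold gamma'. rewrite <- incr_at_after by lia. fold gamma'.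
  rewrite Gam_commutator by (auto; lia).
  unfold reorder_error.
  rewrite Gam_minus by (auto using smooth_Gam, smooth_GamPow). ring.
Qed.

Lemma Gam_GamPow_span_of_error gamma i : length gamma = 7%nat -> (i < 7)%nat ->
  in_span (Gam_monomials (list_sum gamma)) (reorder_error i gamma) ->
  in_span (Gam_monomials (S (list_sum gamma))) (fun f => Gam i (GamPow gamma f)).
Proof.
  intros Hl Hi H.
  apply (in_span_ext _ (fun f t x1 x2 =>
    GamPow (incr_at i gamma) f t x1 x2 + reorder_error i gamma f t x1 x2)).
  { intros. unfold reorder_error. ring. }
  apply in_span_add.
  - apply (in_span_gen _ _ (fun f => f)). repeat split.
    + rewrite length_incr_at. exact Hl.
    + rewrite list_sum_incr_at by lia. lia.
    + rewrite list_sum_incr_at by lia. lia.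
  - apply (in_span_mono (Gam_monomials (list_sum gamma))); [apply Gam_monomials_mono; lia|exact H].
Qed.

(* Moving [Gam_i] past the leading factors of [Gam^gamma] produces commutators of lower order. *)
Lemma reorder_error_span m gamma i : length gamma = 7%nat -> (list_sum gamma <= m)%nat -> (i < 7)%nat ->
  in_span (Gam_monomials (list_sum gamma)) (reorder_error i gamma).
Proof.
  revert gamma i. induction m as [|m IH]; intros gamma i Hl Hs Hi;
    (destruct (leading_zeros_or_succ i gamma) as [[delta ->]|[k [a [rest [Hk E]]]]];
     [lia|apply reorder_error_zeros_span; lia|]).
  - subst gamma. rewrite list_sum_leading_succ in Hs. lia.
  - set (gamma' := repeat 0%nat k ++ a :: rest).
    assert (Hl' : length gamma' = 7%nat) by (rewrite <- Hl, E; apply length_leading_change).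
    assert (Hs' : list_sum gamma = S (list_sum gamma')) by (rewrite E; apply list_sum_leading_succ).
    assert (Hlower : forall delta j, length delta = 7%nat -> (list_sum delta <= m)%nat -> (j < 7)%nat ->
      in_span (Gam_monomials (S (list_sum delta))) (fun f => Gam j (GamPow delta f))).
    { intros. apply Gam_GamPow_span_of_error, IH; auto. }
    subst gamma. rewrite Hs'.
    apply (in_span_ext _ (fun f t x1 x2 => Gam k (reorder_error i gamma' f) t x1 x2
        + sumR (map (fun l => comm_coeff i k l * Gam l (GamPow gamma' f) t x1 x2) (seq 0 7)))).
    { intros f Hf t x1 x2. symmetry. apply reorder_error_step; [lia|exact Hf]. }
    apply in_span_add.
    + apply (in_span_Gam k (Gam_monomials (list_sum gamma'))); [|apply IH; auto; lia].
      intros beta B [-> [Hbl Hbs]]. split; [auto|].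
      apply (in_span_mono (Gam_monomials (S (list_sum beta)))); [apply Gam_monomials_mono; lia|].
      apply Hlower; auto; lia.
    + apply in_span_sum. intros l Hin. apply in_seq in Hin. right. apply Hlower; auto; lia.
Qed.

Lemma Gam_GamPow_span gamma i : length gamma = 7%nat -> (i < 7)%nat ->
  in_span (Gam_monomials (S (list_sum gamma))) (fun f => Gam i (GamPow gamma f)).
Proof. intros Hl Hi. apply Gam_GamPow_span_of_error, (reorder_error_span (list_sum gamma)); auto. Qed.

Lemma in_span_Gam_monomials_Gam n G i : (i < 7)%nat -> in_span (Gam_monomials n) G ->
  in_span (Gam_monomials (S n)) (fun f => Gam i (G f)).
Proof.
  intros Hi H. apply (in_span_Gam i (Gam_monomials n)); [|exact H].
  intros beta B [-> [Hl Hs]]. split; [auto|].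
  apply (in_span_mono (Gam_monomials (S (list_sum beta)))); [apply Gam_monomials_mono; lia|].
  apply Gam_GamPow_span; assumption.
Qed.

Lemma in_span_gam_from alpha : forall i0 n G, (i0 + length alpha <= 7)%nat ->
  in_span (Gam_monomials n) G ->
  in_span (Gam_monomials (n + list_sum alpha)) (fun f => gam_from i0 alpha (G f)).
Proof.
  induction alpha as [|a alpha IH]; intros i0 n G Hlen H; simpl in *.
  - rewrite Nat.add_0_r. exact H.
  - replace (n + (a + list_sum alpha))%nat with (n + list_sum alpha + a)%nat by lia.
    specialize (IH (S i0) n G ltac:(lia) H).
    induction a as [|a IHa]; simpl.
    + rewrite Nat.add_0_r. exact IH.
    + rewrite Nat.add_succ_r. apply in_span_Gam_monomials_Gam; [lia|exact IHa].
Qed.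

Lemma GamPow_Gam_span s alpha j : In alpha (multi_indices 7 s) -> (j < 7)%nat ->
  in_span (Gam_monomials (S s)) (fun f => GamPow alpha (Gam j f)).
Proof.
  intros Halpha Hj. apply In_multi_indices in Halpha. destruct Halpha as [Hl Hs].
  apply (in_span_mono (Gam_monomials (1 + list_sum alpha))); [apply Gam_monomials_mono; lia|].
  apply (in_span_gam_from alpha 0 1 (fun f => Gam j f)); [lia|].
  apply (Gam_GamPow_span (repeat 0%nat 7) j); [reflexivity|exact Hj].
Qed.

Definition deriv_monomials (n : nat) (beta : list nat) (B : fn -> fn) : Prop :=
  (exists l, (l < 3)%nat /\ B = dir l) /\ length beta = 7%nat /\ (list_sum beta <= n)%nat.

Lemma Gam_dir l h : (l < 3)%nat -> Gam (4 + l) h = dir l h.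
Proof. intros H. destruct l as [|[|[|l]]]; [reflexivity..|lia]. Qed.

(* The derivatives span an ideal: [Gam_{4+l}, Gam_k] only involves [Gam_4], [Gam_5], [Gam_6]. *)
Lemma comm_coeff_dir l k m : (l < 3)%nat -> (k < 7)%nat -> (m < 4)%nat -> comm_coeff (4 + l) k m = 0.
Proof.
  intros Hl Hk Hm.
  assert (l = 0 \/ l = 1 \/ l = 2)%nat as El by lia.
  assert (k = 0 \/ k = 1 \/ k = 2 \/ k = 3 \/ k = 4 \/ k = 5 \/ k = 6)%nat as Ek by lia.
  assert (m = 0 \/ m = 1 \/ m = 2 \/ m = 3)%nat as Em by lia.
  destruct El as [->|[->| ->]]; destruct Ek as [->|[->|[->|[->|[->|[->| ->]]]]]];
    destruct Em as [->|[->|[->| ->]]]; reflexivity.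
Qed.

Lemma dir_GamPow_step l k a rest f t x1 x2 : (l < 3)%nat -> (k < 7)%nat -> smooth f ->
  let delta' := repeat 0%nat k ++ a :: rest in
  dir l (GamPow (repeat 0%nat k ++ S a :: rest) f) t x1 x2
  = Gam k (dir l (GamPow delta' f)) t x1 x2
    + sumR (map (fun m => comm_coeff (4 + l) k m * Gam m (GamPow delta' f) t x1 x2) (seq 0 7)).
Proof.
  intros Hl Hk Hf delta'.
  rewrite GamPow_leading_succ. fold delta'.
  rewrite <- (Gam_dir l (Gam k _)), <- (Gam_dir l (GamPow delta' f)) by exact Hl.
  apply Gam_commutator; [lia|exact Hk|apply smooth_GamPow, Hf].
Qed.

Lemma dir_GamPow_span m delta l : length delta = 7%nat -> (list_sum delta <= m)%nat -> (l < 3)%nat ->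
  in_span (deriv_monomials (list_sum delta)) (fun f => dir l (GamPow delta f)).
Proof.
  revert delta l. induction m as [|m IH]; intros delta l Hl Hs Hl3;
    (destruct (leading_zeros_or_succ 7 delta) as [[[|b rest] ->]|[k [a [rest [Hk E]]]]];
     [lia
     |rewrite app_nil_r; apply (in_span_ext _ (fun f => GamPow (repeat 0%nat 7) (dir l f)));
      [reflexivity|apply in_span_gen; repeat split; [exists l; auto|lia]]
     |rewrite length_app, repeat_length in Hl; simpl in Hl; lia
     |]).
  - subst delta. rewrite list_sum_leading_succ in Hs. lia.
  - set (delta' := repeat 0%nat k ++ a :: rest).
    assert (Hl' : length delta' = 7%nat) by (rewrite <- Hl, E; apply length_leading_change).
    assert (Hs' : list_sum delta = S (list_sum delta')) by (rewrite E; apply list_sum_leading_succ).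
    subst delta. rewrite Hs'.
    apply (in_span_ext _ (fun f t x1 x2 => Gam k (dir l (GamPow delta' f)) t x1 x2
        + sumR (map (fun m => comm_coeff (4 + l) k m * Gam m (GamPow delta' f) t x1 x2) (seq 0 7)))).
    { intros f Hf t x1 x2. symmetry. apply dir_GamPow_step; [exact Hl3|lia|exact Hf]. }
    apply in_span_add.
    + apply (in_span_Gam k (deriv_monomials (list_sum delta'))); [|apply IH; auto; lia].
      intros beta B [[l' [Hl'3 ->]] [Hbl Hbs]]. split; [intros; apply smooth_dir; assumption|].
      assert (Hspan := in_span_precomp (Gam_monomials (S (list_sum beta)))
                         (fun g => Gam k (GamPow beta g)) (dir l') (smooth_dir l')
                         (Gam_GamPow_span beta k Hbl ltac:(lia))).
      refine (in_span_mono _ _ _ _ Hspan).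
      intros beta' B' [B0 [[-> [H1 H2]] ->]].
      split; [exists l'; split; auto|]. split; [exact H1|lia].
    + apply in_span_sum. intros j Hj. apply in_seq in Hj.
      destruct (Nat.lt_ge_cases j 4) as [Hj4|Hj4]; [left; apply comm_coeff_dir; lia|right].
      replace j with (4 + (j - 4))%nat by lia.
      apply (in_span_ext _ (fun f => dir (j - 4) (GamPow delta' f))).
      { intros. rewrite Gam_dir by lia. reflexivity. }
      apply (in_span_mono (deriv_monomials (list_sum delta'))); [|apply IH; auto; lia].
      intros beta B [HB [H1 H2]]. repeat split; auto; lia.
Qed.

(** * Estimates *)

Lemma sumR_map_le {X : Type} (L : list X) (F G : X -> R) :
  (forall x, In x L -> F x <= G x) -> sumR (map F L) <= sumR (map G L).
Proof.
  induction L as [|x L IH]; intros H; simpl; [lra|].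
  apply Rplus_le_compat; [apply H; left; reflexivity|apply IH; intros; apply H; right; assumption].
Qed.

Lemma sumR_map_const {X : Type} (L : list X) c : sumR (map (fun _ => c) L) = INR (length L) * c.
Proof.
  induction L as [|x L IH]; [simpl; ring|].
  change (c + sumR (map (fun _ => c) L) = INR (S (length L)) * c). rewrite IH, S_INR. ring.
Qed.

Lemma sumR_map_nonneg {X : Type} (L : list X) (F : X -> R) :
  (forall x, In x L -> 0 <= F x) -> 0 <= sumR (map F L).
Proof.
  intros H. rewrite <- (Rmult_0_r (INR (length L))), <- sumR_map_const. apply sumR_map_le, H.
Qed.

Lemma sumR_map_In {X : Type} (L : list X) (F : X -> R) x :
  (forall y, In y L -> 0 <= F y) -> In x L -> F x <= sumR (map F L).
Proof.
  induction L as [|y L IH]; intros H Hx; [destruct Hx|]. simpl.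
  assert (HL : 0 <= sumR (map F L)) by (apply sumR_map_nonneg; intros; apply H; right; assumption).
  destruct Hx as [<-|Hx]; [lra|].
  pose proof (H y (or_introl eq_refl)). pose proof (IH (fun z Hz => H z (or_intror Hz)) Hx). lra.
Qed.

Lemma uniform_bound {X : Type} (L : list X) (Pr : X -> R -> Prop) :
  (forall x K K', K <= K' -> Pr x K -> Pr x K') ->
  (forall x, In x L -> exists K, Pr x K) -> exists K, 0 <= K /\ forall x, In x L -> Pr x K.
Proof.
  intros Hmono. induction L as [|x L IH]; intros H.
  - exists 0. split; [lra|]. intros x [].
  - destruct (H x (or_introl eq_refl)) as [K1 P1].
    destruct IH as [K2 [HK2 P2]]; [intros; apply H; right; assumption|].
    exists (Rmax K1 K2). split; [apply (Rle_trans _ K2); [exact HK2|apply Rmax_r]|].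
    intros y [<-|Hy]; [apply (Hmono _ K1); [apply Rmax_l|exact P1]|].
    apply (Hmono _ K2); [apply Rmax_r|apply P2, Hy].
Qed.

Lemma normx_nonneg x1 x2 : 0 <= normx x1 x2.
Proof. apply sqrt_pos. Qed.

Lemma normx_pos x1 x2 : (x1 <> 0 \/ x2 <> 0) -> 0 < normx x1 x2.
Proof.
  intros H. apply sqrt_lt_R0.
  destruct H as [H|H]; pose proof (pow2_ge_0 x1); pose proof (pow2_ge_0 x2);
    [pose proof (pow2_gt_0 x1 H)|pose proof (pow2_gt_0 x2 H)]; lra.
Qed.

Lemma normx_sq x1 x2 : normx x1 x2 * normx x1 x2 = x1 * x1 + x2 * x2.
Proof.
  unfold normx. rewrite sqrt_sqrt; [ring|]. pose proof (pow2_ge_0 x1). pose proof (pow2_ge_0 x2). lra.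
Qed.

Lemma Rabs_le_normx_l x1 x2 : Rabs x1 <= normx x1 x2.
Proof.
  unfold normx. rewrite <- sqrt_Rsqr_abs. apply sqrt_le_1_alt.
  unfold Rsqr. pose proof (pow2_ge_0 x2). simpl. lra.
Qed.

Lemma Rabs_le_normx_r x1 x2 : Rabs x2 <= normx x1 x2.
Proof.
  unfold normx. rewrite <- sqrt_Rsqr_abs. apply sqrt_le_1_alt.
  unfold Rsqr. pose proof (pow2_ge_0 x1). simpl. lra.
Qed.

Lemma Rabs_le_japan y : Rabs y <= japan y.
Proof. unfold japan. rewrite <- sqrt_Rsqr_abs. apply sqrt_le_1_alt. unfold Rsqr. simpl. lra. Qed.

Lemma japan_ge_1 y : 1 <= japan y.
Proof.
  unfold japan. rewrite <- sqrt_1 at 1. apply sqrt_le_1_alt. pose proof (pow2_ge_0 y). lra.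
Qed.

Lemma Rabs_frame_le r J a b c0 c1 c2 z1 z2 D0 D1 D2 :
  Rabs a <= r -> Rabs b <= r -> Rabs c0 <= J -> Rabs c1 <= J -> Rabs c2 <= J ->
  Rabs (a * z1 + b * z2 + c0 * D0 + c1 * D1 + c2 * D2)
  <= r * (Rabs z1 + Rabs z2) + J * (Rabs D0 + Rabs D1 + Rabs D2).
Proof.
  intros Ha Hb H0 H1 H2.
  assert (Hmul : forall c u K, Rabs c <= K -> Rabs (c * u) <= K * Rabs u).
  { intros c u K Hc. rewrite Rabs_mult. apply Rmult_le_compat_r; [apply Rabs_pos|exact Hc]. }
  pose proof (Hmul a z1 r Ha). pose proof (Hmul b z2 r Hb).
  pose proof (Hmul c0 D0 J H0). pose proof (Hmul c1 D1 J H1). pose proof (Hmul c2 D2 J H2).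
  pose proof (Rabs_triang (a * z1) (b * z2)).
  pose proof (Rabs_triang (a * z1 + b * z2 + c0 * D0 + c1 * D1) (c2 * D2)).
  pose proof (Rabs_triang (a * z1 + b * z2 + c0 * D0) (c1 * D1)).
  pose proof (Rabs_triang (a * z1 + b * z2) (c0 * D0)).
  lra.
Qed.

(* With r = |x|: S = (t - r) d_t + x_1 Z_1 + x_2 Z_2, L_j = r Z_j + (t - r) d_j and
   Omega = x_1 Z_2 - x_2 Z_1. *)
Lemma Gam_Z_frame k phi t x1 x2 : (x1 <> 0 \/ x2 <> 0) ->
  let r := normx x1 x2 in let J := japan (t - r) in
  exists a b c0 c1 c2,
    Rabs a <= r /\ Rabs b <= r /\ Rabs c0 <= J /\ Rabs c1 <= J /\ Rabs c2 <= J /\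
    Gam k phi t x1 x2 = a * Z1 phi t x1 x2 + b * Z2 phi t x1 x2
      + c0 * dir 0 phi t x1 x2 + c1 * dir 1 phi t x1 x2 + c2 * dir 2 phi t x1 x2.
Proof.
  intros Hx r J.
  assert (Hr : 0 < r) by apply normx_pos, Hx.
  assert (Hsq : x1 * (x1 / r) + x2 * (x2 / r) = r).
  { pose proof (normx_sq x1 x2) as E. fold r in E.
    replace (x1 * (x1 / r) + x2 * (x2 / r)) with ((x1 * x1 + x2 * x2) / r) by (field; lra).
    rewrite <- E. field. lra. }
  assert (B1 : Rabs x1 <= r) by apply Rabs_le_normx_l.
  assert (B2 : Rabs x2 <= r) by apply Rabs_le_normx_r.
  assert (Bt : Rabs (t - r) <= J) by apply Rabs_le_japan.
  assert (J1 : 1 <= J) by apply japan_ge_1.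
  assert (B0r : Rabs 0 <= r) by (rewrite Rabs_R0; lra).
  assert (B0J : Rabs 0 <= J) by (rewrite Rabs_R0; lra).
  assert (B1J : Rabs 1 <= J) by (rewrite Rabs_R1; lra).
  assert (Brr : Rabs r <= r) by (rewrite Rabs_right; lra).
  assert (B2' : Rabs (- x2) <= r) by (rewrite Rabs_Ropp; exact B2).
  unfold Z1, Z2. cbn [dir]. fold r.
  set (D0 := d0 phi t x1 x2). set (D1 := Defs.d1 phi t x1 x2). set (D2 := Defs.d2 phi t x1 x2).
  destruct k as [|[|[|[|[|[|k]]]]]]; cbn [Gam]; unfold S_op, L1_op, L2_op, Om_op; fold D0 D1 D2.
  - exists x1, x2, (t - r), 0, 0. repeat split; try assumption.
    transitivity (t * D0 + x1 * D1 + x2 * D2 + (x1 * (x1 / r) + x2 * (x2 / r) - r) * D0);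
      [rewrite Hsq|]; ring.
  - exists r, 0, 0, (t - r), 0. repeat split; try assumption. field. lra.
  - exists 0, r, 0, 0, (t - r). repeat split; try assumption. field. lra.
  - exists (- x2), x1, 0, 0, 0. repeat split; try assumption. field. lra.
  - exists 0, 0, 1, 0, 0. repeat split; try assumption. ring.
  - exists 0, 0, 0, 1, 0. repeat split; try assumption. ring.
  - exists 0, 0, 0, 0, 1. repeat split; try assumption. ring.
Qed.

Lemma Gam_pointwise_bound k phi t x1 x2 : (x1 <> 0 \/ x2 <> 0) ->
  Rabs (Gam k phi t x1 x2)
  <= normx x1 x2 * (Rabs (Z1 phi t x1 x2) + Rabs (Z2 phi t x1 x2))
     + japan (t - normx x1 x2)
       * (Rabs (dir 0 phi t x1 x2) + Rabs (dir 1 phi t x1 x2) + Rabs (dir 2 phi t x1 x2)).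
Proof.
  intros Hx. destruct (Gam_Z_frame k phi t x1 x2 Hx) as (a & b & c0 & c1 & c2 & Ha & Hb & H0 & H1 & H2 & ->).
  apply Rabs_frame_le; assumption.
Qed.

Definition bound_norm (s : nat) (f : fn) (t x1 x2 : R) : R :=
  normx x1 x2 * normZ s f t x1 x2 + japan (t - normx x1 x2) * normDeriv s f t x1 x2.

Lemma seminorm_nonneg s f t x1 x2 : 0 <= seminorm s f t x1 x2.
Proof. apply sumR_map_nonneg. intros; apply Rabs_pos. Qed.

Lemma normDeriv_nonneg s f t x1 x2 : 0 <= normDeriv s f t x1 x2.
Proof. apply sumR_map_nonneg. intros; apply seminorm_nonneg. Qed.

Lemma Z_terms_nonneg alpha f t x1 x2 :
  0 <= Rabs (Z1 (GamPow alpha f) t x1 x2) + Rabs (Z2 (GamPow alpha f) t x1 x2).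
Proof.
  pose proof (Rabs_pos (Z1 (GamPow alpha f) t x1 x2)).
  pose proof (Rabs_pos (Z2 (GamPow alpha f) t x1 x2)). lra.
Qed.

Lemma normZ_nonneg s f t x1 x2 : 0 <= normZ s f t x1 x2.
Proof. apply sumR_map_nonneg. intros; apply Z_terms_nonneg. Qed.

Lemma bound_norm_nonneg s f t x1 x2 : 0 <= bound_norm s f t x1 x2.
Proof.
  pose proof (japan_ge_1 (t - normx x1 x2)). pose proof (normx_nonneg x1 x2).
  pose proof (normZ_nonneg s f t x1 x2). pose proof (normDeriv_nonneg s f t x1 x2).
  unfold bound_norm. apply Rplus_le_le_0_compat; apply Rmult_le_pos; lra.
Qed.

Lemma GamPow_dir_le_normDeriv s alpha l f t x1 x2 : In alpha (multi_indices 7 s) -> (l < 3)%nat ->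
  Rabs (GamPow alpha (dir l f) t x1 x2) <= normDeriv s f t x1 x2.
Proof.
  intros Halpha Hl. apply (Rle_trans _ (seminorm s (dir l f) t x1 x2)).
  - apply (sumR_map_In _ (fun alpha => Rabs (GamPow alpha (dir l f) t x1 x2))); [|exact Halpha].
    intros; apply Rabs_pos.
  - apply (sumR_map_In _ (fun j => seminorm s (dir j f) t x1 x2)).
    + intros; apply seminorm_nonneg.
    + apply in_seq. lia.
Qed.

Lemma dir_GamPow_bound s : exists KD, 0 <= KD /\
  forall delta l, In (delta, l) (list_prod (multi_indices 7 s) (seq 0 3)) ->
  forall f, smooth f -> forall t x1 x2,
    Rabs (dir l (GamPow delta f) t x1 x2) <= KD * normDeriv s f t x1 x2.
Proof.
  destruct (uniform_bound (list_prod (multi_indices 7 s) (seq 0 3)) (fun p K =>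
    forall f, smooth f -> forall t x1 x2,
      Rabs (dir (snd p) (GamPow (fst p) f) t x1 x2) <= K * normDeriv s f t x1 x2)) as [KD [HKD P]].
  - intros p K K' HK P f Hf t x1 x2. eapply Rle_trans; [apply P, Hf|].
    apply Rmult_le_compat_r; [apply normDeriv_nonneg|exact HK].
  - intros [delta l] Hin. apply in_prod_iff in Hin. destruct Hin as [Hdelta Hl].
    apply In_multi_indices in Hdelta. apply in_seq in Hl.
    destruct (in_span_bound _ _ (dir_GamPow_span (list_sum delta) delta l (proj1 Hdelta) (le_n _)
                                   ltac:(lia))) as [K [_ HK]].
    exists K. intros f Hf t x1 x2. apply HK; [exact Hf|].
    intros beta B [[l' [Hl' ->]] [Hbl Hbs]]. apply GamPow_dir_le_normDeriv; [|exact Hl'].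
    apply In_multi_indices. split; [exact Hbl|lia].
  - exists KD. split; [exact HKD|]. intros delta l Hin. exact (P (delta, l) Hin).
Qed.

Lemma Gam_GamPow_le s delta k f t x1 x2 : In delta (multi_indices 7 s) -> (x1 <> 0 \/ x2 <> 0) ->
  Rabs (Gam k (GamPow delta f) t x1 x2)
  <= normx x1 x2 * normZ s f t x1 x2
     + japan (t - normx x1 x2) * (Rabs (dir 0 (GamPow delta f) t x1 x2)
         + Rabs (dir 1 (GamPow delta f) t x1 x2) + Rabs (dir 2 (GamPow delta f) t x1 x2)).
Proof.
  intros Hin Hx. eapply Rle_trans; [apply Gam_pointwise_bound, Hx|].
  apply Rplus_le_compat_r, Rmult_le_compat_l; [apply normx_nonneg|].
  apply (sumR_map_In _ (fun alpha => Rabs (Z1 (GamPow alpha f) t x1 x2)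
                                     + Rabs (Z2 (GamPow alpha f) t x1 x2))); [|exact Hin].
  intros; apply Z_terms_nonneg.
Qed.

Lemma Gam_monomial_bound s : exists K, 0 <= K /\
  forall beta B, Gam_monomials (S s) beta B ->
  forall f, smooth f -> forall t x1 x2, (x1 <> 0 \/ x2 <> 0) ->
    Rabs (GamPow beta (B f) t x1 x2) <= K * bound_norm s f t x1 x2.
Proof.
  destruct (dir_GamPow_bound s) as [KD [HKD HD]].
  exists (1 + 3 * KD). split; [lra|].
  intros beta B [-> [Hl [Hs1 Hs2]]] f Hf t x1 x2 Hx.
  destruct (leading_zeros_or_succ 7 beta) as [[delta E]|[k [a [rest [Hk E]]]]]; [lia| |].
  - destruct delta as [|b rest]; subst beta; rewrite ?length_app, ?repeat_length in Hl; simpl in *; lia.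
  - set (delta' := repeat 0%nat k ++ a :: rest).
    assert (Hin : In delta' (multi_indices 7 s)).
    { apply In_multi_indices. split.
      - rewrite <- Hl, E. apply length_leading_change.
      - rewrite E, list_sum_leading_succ in Hs2. unfold delta'. lia. }
    assert (HDl : forall l, (l < 3)%nat ->
      Rabs (dir l (GamPow delta' f) t x1 x2) <= KD * normDeriv s f t x1 x2).
    { intros l Hl3. apply HD; [apply in_prod; [exact Hin|apply in_seq; lia]|exact Hf]. }
    rewrite E, GamPow_leading_succ. fold delta'.
    eapply Rle_trans; [apply (Gam_GamPow_le s); assumption|].
    pose proof (HDl 0%nat ltac:(lia)). pose proof (HDl 1%nat ltac:(lia)). pose proof (HDl 2%nat ltac:(lia)).
    pose proof (normx_nonneg x1 x2). pose proof (japan_ge_1 (t - normx x1 x2)).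
    pose proof (normZ_nonneg s f t x1 x2). pose proof (normDeriv_nonneg s f t x1 x2).
    unfold bound_norm. set (J := japan (t - normx x1 x2)) in *.
    assert (0 <= KD * (normx x1 x2 * normZ s f t x1 x2))
      by (apply Rmult_le_pos; [|apply Rmult_le_pos]; lra).
    nra.
Qed.

Lemma GamPow_Gam_bound s : exists K, 0 <= K /\
  forall alpha j, In (alpha, j) (list_prod (multi_indices 7 s) (seq 0 7)) ->
  forall f, smooth f -> forall t x1 x2, (x1 <> 0 \/ x2 <> 0) ->
    Rabs (GamPow alpha (Gam j f) t x1 x2) <= K * bound_norm s f t x1 x2.
Proof.
  destruct (Gam_monomial_bound s) as [K0 [HK0 H0]].
  destruct (uniform_bound (list_prod (multi_indices 7 s) (seq 0 7)) (fun p K =>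
    forall f, smooth f -> forall t x1 x2, (x1 <> 0 \/ x2 <> 0) ->
      Rabs (GamPow (fst p) (Gam (snd p) f) t x1 x2) <= K * bound_norm s f t x1 x2)) as [K [HK P]].
  - intros p K K' HKK' P f Hf t x1 x2 Hx. eapply Rle_trans; [apply P; assumption|].
    apply Rmult_le_compat_r; [apply bound_norm_nonneg|exact HKK'].
  - intros [alpha j] Hin. apply in_prod_iff in Hin. destruct Hin as [Halpha Hj]. apply in_seq in Hj.
    destruct (in_span_bound _ _ (GamPow_Gam_span s alpha j Halpha ltac:(lia))) as [K [_ HK]].
    exists (K * K0). intros f Hf t x1 x2 Hx. rewrite Rmult_assoc.
    apply HK; [exact Hf|]. intros beta B HB. apply H0; assumption.
  - exists K. split; [exact HK|]. intros alpha j Hin. exact (P (alpha, j) Hin).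
Qed.

Lemma normGamma_le_bound_norm s : exists K, 0 <= K /\
  forall psi, smooth psi -> forall t x1 x2, (x1 <> 0 \/ x2 <> 0) ->
    normGamma s psi t x1 x2 <= K * bound_norm s psi t x1 x2.
Proof.
  destruct (GamPow_Gam_bound s) as [K [HK P]].
  set (N := INR (length (seq 0 7)) * INR (length (multi_indices 7 s))).
  assert (HN : 0 <= N) by (apply Rmult_le_pos; apply pos_INR).
  exists (N * K). split; [apply Rmult_le_pos; assumption|].
  intros psi Hpsi t x1 x2 Hx. unfold normGamma, seminorm.
  set (b := bound_norm s psi t x1 x2).
  apply (Rle_trans _ (sumR (map (fun _ => sumR (map (fun _ => K * b) (multi_indices 7 s))) (seq 0 7)))).
  - apply sumR_map_le. intros j Hj. apply sumR_map_le. intros alpha Halpha.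
    apply P; [apply in_prod; assumption|exact Hpsi|exact Hx].
  - rewrite !sumR_map_const. unfold N. right. ring.
Qed.

Theorem lemma2p6 : forall s : nat, exists C : R, 0 < C /\
  forall psi : fn, smooth psi ->
  forall t x1 x2 : R, (x1 <> 0 \/ x2 <> 0) ->
    normGamma s psi t x1 x2 <=
      C * normx x1 x2 * normZ s psi t x1 x2
      + C * japan (t - normx x1 x2) * normDeriv s psi t x1 x2.
Proof.
  intros s. destruct (normGamma_le_bound_norm s) as [K [HK Hbound]].
  exists (K + 1). split; [lra|].
  intros psi Hpsi t x1 x2 Hx.
  eapply Rle_trans; [apply Hbound; assumption|].
  pose proof (bound_norm_nonneg s psi t x1 x2).
  unfold bound_norm in *. nra.
Qed.
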